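(* Suppose $\mathcal X_1,\dots,\mathcal X_n$ satisfy Condition (RIP) with $\delta\in(0,1/3)$. Fix $l\in\{1,\dots,L\}$ and let $\hat{\mathcal A}=\bigotimes_{k=L}^{l+1}\hat{\mathcal A}_k$, $\mathcal A=\bigotimes_{k=L}^{l+1}\mathcal A_k$ and $\hat{\mathcal G}=\bigotimes_{k=l-1}^{1}\hat{\mathcal G}_k$ with all factors in $\mathbb R^{d_k\times p_k\times q_k}$ and $\|\hat{\mathcal A}\|_F=\|\mathcal A\|_F=\|\hat{\mathcal G}\|_F=1$ (for $l=L$, resp. $l=1$, the corresponding product is the array $1$). Let $\hat{\mathbf x}_i=\mathrm{vec}(\tilde{\mathcal X}_i^{(l)}(\hat{\mathcal A},\hat{\mathcal G}))$, $\mathbf x_i=\mathrm{vec}(\tilde{\mathcal X}_i^{(l)}(\mathcal A,\hat{\mathcal G}))$, $\hat{\boldsymbol\Sigma}=\frac1n\sum_i\hat{\mathbf x}_i\hat{\mathbf x}_i^\top$ and $\boldsymbol\Sigma=\frac1n\sum_i\hat{\mathbf x}_i\mathbf x_i^\top$. Then $\hat{\boldsymbol\Sigma}$ is invertible and $$\big\|\hat{\boldsymbol\Sigma}^{-1}\big(\langle\hat{\mathcal A},\mathcal A\rangle\hat{\boldsymbol\Sigma}-\boldsymbol\Sigma\big)\big\|_2\le\frac{3\delta}{1-3\delta}\,\mathrm{dist}(\hat{\mathcal A},\mathcal A),$$ where $\|\cdot\|_2$ is the spectral norm.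
   Context: Arrays are real 3-way arrays; $\langle\cdot,\cdot\rangle$ and $\|\cdot\|_F$ are the entrywise inner product and norm. For $\mathcal A\in\mathbb R^{a_1\times a_2\times a_3}$, $\mathcal B\in\mathbb R^{b_1\times b_2\times b_3}$ the Kronecker product $\mathcal A\otimes\mathcal B\in\mathbb R^{a_1b_1\times a_2b_2\times a_3b_3}$ has entries $(\mathcal A\otimes\mathcal B)_{(h_1-1)b_1+h_2,\,(j_1-1)b_2+j_2,\,(k_1-1)b_3+k_2}=\mathcal A_{h_1j_1k_1}\mathcal B_{h_2j_2k_2}$; it is associative, $\bigotimes_{l=L}^1\mathcal B_l:=\mathcal B_L\otimes\cdots\otimes\mathcal B_1$, and the $1\times1\times1$ array $1$ is neutral. Fix $L\ge2$, positive integers $d_l,p_l,q_l$, $d=\prod_ld_l$, $p=\prod_lp_l$, $q=\prod_lq_l$; vec is a fixed vectorization. For nonzero arrays of the same shape, $\mathrm{dist}(\mathcal U,\mathcal V)=\big(1-\langle\mathcal U,\mathcal V\rangle^2/(\|\mathcal U\|_F^2\|\mathcal V\|_F^2)\big)^{1/2}$. Condition (RIP) with constant $\delta\in(0,1)$: for all arrays $\mathcal B_l^r\in\mathbb R^{d_l\times p_l\times q_l}$ ($l=1,\dots,L$, $r=1,2$), with $\mathcal S=\sum_{r=1}^2\bigotimes_{l=L}^1\mathcal B_l^r$, $(1-\delta)\|\mathcal S\|_F^2\le\frac1n\sum_{i=1}^n\langle\mathcal X_i,\mathcal S\rangle^2\le(1+\delta)\|\mathcal S\|_F^2$. For $l\in\{1,\dots,L\}$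 let $D_l^+=\prod_{k=l+1}^Ld_k$, $D_l^-=\prod_{k=1}^{l-1}d_k$, similarly $P_l^\pm,Q_l^\pm$ (empty products are 1); for $\mathcal A\in\mathbb R^{D_l^+\times P_l^+\times Q_l^+}$, $\mathcal G\in\mathbb R^{D_l^-\times P_l^-\times Q_l^-}$, $\tilde{\mathcal X}_i^{(l)}(\mathcal A,\mathcal G)\in\mathbb R^{d_l\times p_l\times q_l}$ is the unique array with $\langle\tilde{\mathcal X}_i^{(l)}(\mathcal A,\mathcal G),\mathcal B\rangle=\langle\mathcal X_i,\mathcal A\otimes\mathcal B\otimes\mathcal G\rangle$ for all $\mathcal B\in\mathbb R^{d_l\times p_l\times q_l}$. *)

From HB Require Import structures.
From mathcomp Require Import all_boot all_order all_algebra.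
From mathcomp Require Import boolp classical_sets reals.
Set Implicit Arguments. Unset Strict Implicit. Unset Printing Implicit Defensive.
Import Order.TTheory GRing.Theory Num.Theory.
Local Open Scope ring_scope.
Local Open Scope classical_set_scope.

Section Arrays.
Variable R : realType.

(* A real 3-way array, 0-based indices; only the entries inside the declared
   shape (a1,a2,a3) are ever read by the operations below. *)
Definition arr := nat -> nat -> nat -> R.

Definition ainner (a1 a2 a3 : nat) (A B : arr) : R :=
  \sum_(h < a1) \sum_(j < a2) \sum_(k < a3) A h j k * B h j k.

Definition afnorm (a1 a2 a3 : nat) (A : arr) : R := Num.sqrt (ainner a1 a2 a3 A A).

(* Kronecker product A (x) B where B has shape b1 x b2 x b3:
   (A (x) B)_{h1*b1+h2, j1*b2+j2, k1*b3+k2} = A_{h1 j1 k1} B_{h2 j2 k2} *)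
Definition akron (b1 b2 b3 : nat) (A B : arr) : arr := fun h j k =>
  A (h %/ b1)%N (j %/ b2)%N (k %/ b3)%N * B (h %% b1)%N (j %% b2)%N (k %% b3)%N.

Definition aone : arr := fun _ _ _ => 1.

Definition aadd (A B : arr) : arr := fun h j k => A h j k + B h j k.

Definition adelta (h0 j0 k0 : nat) : arr :=
  fun h j k => ((h == h0) && (j == j0) && (k == k0))%:R.

Fixpoint akprod (d p q : nat -> nat) (F : nat -> arr) (s : seq nat) : arr :=
  match s with
  | [::] => aone
  | k :: s' => akron (\prod_(m <- s') d m) (\prod_(m <- s') p m) (\prod_(m <- s') q m)
                     (F k) (akprod d p q F s')
  end.

Definition descseq (lo hi : nat) : seq nat := rev (iota lo (hi.+1 - lo)).

Definition adist (a1 a2 a3 : nat) (U V : arr) : R :=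
  Num.sqrt (1 - ainner a1 a2 a3 U V ^+ 2 / (ainner a1 a2 a3 U U * ainner a1 a2 a3 V V)).

(* Condition (RIP) with constant delta; X i (i < n) has shape d x p x q with
   d = prod_{l=1}^L d_l etc.  B r l is the factor B_l^r. *)
Definition RIP (L : nat) (d p q : nat -> nat) (n : nat) (X : nat -> arr) (delta : R) : Prop :=
  (0 < delta < 1) /\
  forall B : nat -> nat -> arr,
    let s := descseq 1 L in
    let D := (\prod_(m <- s) d m)%N in
    let P := (\prod_(m <- s) p m)%N in
    let Q := (\prod_(m <- s) q m)%N in
    let S := aadd (akprod d p q (B 1%N) s) (akprod d p q (B 2%N) s) in
    (1 - delta) * ainner D P Q S S
      <= n%:R^-1 * \sum_(i < n) ainner D P Q (X i) S ^+ 2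
      <= (1 + delta) * ainner D P Q S S.

(* Its (h,j,k) entry is <X, A (x) E_{hjk} (x) G>, i.e. it is the unique array
   with <tildeX, B> = <X, A (x) B (x) G> for all B. *)
Definition atilde (aA aB aC gA gB gC b1 b2 b3 : nat) (X A G : arr) : arr :=
  fun h j k =>
    ainner (aA * b1 * gA) (aB * b2 * gB) (aC * b3 * gC) X
      (akron (b1 * gA) (b2 * gB) (b3 * gC) A (akron gA gB gC (adelta h j k) G)).

Definition avec (a b c : nat) (X : arr) : 'cV[R]_(a * b * c) :=
  \col_(i < a * b * c) X (i %/ (b * c))%N ((i %/ c) %% b)%N (i %% c)%N.

Definition vnorm (N : nat) (v : 'cV[R]_N) : R := Num.sqrt (\sum_i v i 0 ^+ 2).

Definition specnorm (N : nat) (M : 'M[R]_N) : R :=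
  sup [set vnorm (M *m v) | v in [set v : 'cV[R]_N | vnorm v = 1]].

End Arrays.

From HB Require Import structures.
From mathcomp Require Import all_boot all_order all_algebra.
From mathcomp Require Import boolp classical_sets reals.
From mathcomp Require Import ring lra zify.
Import Order.TTheory GRing.Theory Num.Theory.
Set Implicit Arguments. Unset Strict Implicit. Unset Printing Implicit Defensive.
Local Open Scope ring_scope.
Local Open Scope classical_set_scope.

(* The argument separates the algebra of arrays from a statement about vectors.

   1. Vector form.  Let x^_i, x_i be vectors, c a scalar, and suppose the
      empirical form  q_emp(u,v) = (1/n) sum_i (<u,x^_i> + <v,x_i>)^2  is within
      a factor 1 +- delta of  q_pop(u,v) = |u|^2 + 2c<u,v> + |v|^2.  Taking v = 0
      shows S^ >= (1-delta) I, so S^ is invertible.  For a unit v, the vector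
      w = S^^-1 (c S^ - S) v satisfies  (1-delta)|w|^2 <= w'S^w = e  with e a
      cross term, and polarizing the RIP bounds at  (s w + t c v, -t v),
      t = +-1, gives  2 s e <= delta (s^2 |w|^2 + 1 - c^2)  for every s > 0.
      A one-variable inequality then yields  |w| <= 3delta/(1-3delta) sqrt(1-c^2).
   2. Array form.  Identifying u with the array B_u of shape d_l x p_l x q_l,
      <u, x^_i> = <X_i, A^ (x) B_u (x) G^>, and the Kronecker norms factor, so
      q_pop is the squared norm of  A^ (x) B_u (x) G^ + A (x) B_v (x) G^.  The
      condition (RIP), applied to the factor families obtained by splicing B_u,
      B_v into position l, is therefore exactly the vector hypothesis above,
      while dist(A^,A) = sqrt(1 - c^2) for unit-norm A^, A with c = <A^,A>. *)

Section ArrayAlgebra.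
Variable R : realType.
Implicit Types A B C U V W : arr R.

Lemma akronA b1 b2 b3 c1 c2 c3 A B C :
  akron (b1 * c1) (b2 * c2) (b3 * c3) A (akron c1 c2 c3 B C) =
  akron c1 c2 c3 (akron b1 b2 b3 A B) C.
Proof.
apply/funext=> h; apply/funext=> j; apply/funext=> k; rewrite /akron.
rewrite mulrA -!modn_divl ![(_ * c1)%N]mulnC ![(_ * c2)%N]mulnC ![(_ * c3)%N]mulnC.
by rewrite !divnMA !modn_dvdm ?dvdn_mulr.
Qed.

Lemma divmod_split i j b : (j < b)%N -> ((i * b + j) %/ b = i /\ (i * b + j) %% b = j)%N.
Proof.
move=> jb; have b0 : (0 < b)%N by apply: leq_ltn_trans jb.
by rewrite divnMDl // divn_small // addn0 modnMDl modn_small.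
Qed.

Lemma sum_ord_mul (a b : nat) (F : nat -> R) :
  \sum_(i < a * b) F i = \sum_(i < a) \sum_(j < b) F (i * b + j)%N.
Proof.
elim: a => [|a IH]; first by rewrite mul0n !big_ord0.
rewrite big_ord_recr /= -IH mulSnr big_split_ord /=.
by congr (_ + _); apply: eq_bigr => j _.
Qed.

Definition alin (x : R) U (y : R) V : arr R := fun h j k => x * U h j k + y * V h j k.

Lemma ainnerC a1 a2 a3 U V : ainner a1 a2 a3 U V = ainner a1 a2 a3 V U.
Proof.
rewrite /ainner; apply: eq_bigr => h _; apply: eq_bigr => j _; apply: eq_bigr => k _.
by rewrite mulrC.
Qed.

Lemma ainner_linl a1 a2 a3 x U y V W :
  ainner a1 a2 a3 (alin x U y V) W = x * ainner a1 a2 a3 U W + y * ainner a1 a2 a3 V W.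
Proof.
rewrite /ainner !mulr_sumr -big_split; apply: eq_bigr => h _.
rewrite !mulr_sumr -big_split; apply: eq_bigr => j _.
rewrite !mulr_sumr -big_split; apply: eq_bigr => k _.
by rewrite /alin mulrDl !mulrA.
Qed.

Lemma ainner_linr a1 a2 a3 x U y V W :
  ainner a1 a2 a3 W (alin x U y V) = x * ainner a1 a2 a3 W U + y * ainner a1 a2 a3 W V.
Proof. by rewrite ainnerC ainner_linl !(ainnerC _ _ _ W). Qed.

Lemma ainner_ge0 a1 a2 a3 U : 0 <= ainner a1 a2 a3 U U.
Proof.
rewrite /ainner; apply: sumr_ge0 => h _; apply: sumr_ge0 => j _; apply: sumr_ge0 => k _.
by rewrite -expr2 sqr_ge0.
Qed.

Lemma afnorm_eq1 a1 a2 a3 U : afnorm a1 a2 a3 U = 1 -> ainner a1 a2 a3 U U = 1.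
Proof. by rewrite /afnorm => H; rewrite -(sqr_sqrtr (ainner_ge0 a1 a2 a3 U)) H expr1n. Qed.

Lemma adist_unit a1 a2 a3 U V : ainner a1 a2 a3 U U = 1 -> ainner a1 a2 a3 V V = 1 ->
  adist a1 a2 a3 U V = Num.sqrt (1 - ainner a1 a2 a3 U V ^+ 2).
Proof. by move=> nU nV; rewrite /adist nU nV mulr1 divr1. Qed.

Lemma ainner_kron a1 a2 a3 b1 b2 b3 A B A' B' :
  ainner (a1 * b1) (a2 * b2) (a3 * b3) (akron b1 b2 b3 A B) (akron b1 b2 b3 A' B') =
  ainner a1 a2 a3 A A' * ainner b1 b2 b3 B B'.
Proof.
rewrite /ainner.
set P := akron b1 b2 b3 A B; set P' := akron b1 b2 b3 A' B'.
rewrite (sum_ord_mul a1 b1 (fun h => \sum_(j < a2 * b2) \sum_(k < a3 * b3) P h j k * P' h j k)).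
under eq_bigr => h1 _ do under eq_bigr => h2 _ do
  rewrite (sum_ord_mul a2 b2
             (fun j => \sum_(k < a3 * b3) P (h1 * b1 + h2)%N j k * P' (h1 * b1 + h2)%N j k)).
under eq_bigr => h1 _ do under eq_bigr => h2 _ do under eq_bigr => j1 _ do
  under eq_bigr => j2 _ do
  rewrite (sum_ord_mul a3 b3 (fun k => P (h1 * b1 + h2)%N (j1 * b2 + j2)%N k *
                                      P' (h1 * b1 + h2)%N (j1 * b2 + j2)%N k)).
rewrite /P /P' mulr_suml; apply: eq_bigr => h1 _.
rewrite exchange_big /= mulr_suml; apply: eq_bigr => j1 _.
under eq_bigr => h2 _ do rewrite exchange_big /=.
rewrite exchange_big /= mulr_suml; apply: eq_bigr => k1 _.
rewrite mulr_sumr; apply: eq_bigr => h2 _.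
rewrite mulr_sumr; apply: eq_bigr => j2 _.
rewrite mulr_sumr; apply: eq_bigr => k2 _.
rewrite /akron.
have [-> ->] := divmod_split h1 (ltn_ord h2).
have [-> ->] := divmod_split j1 (ltn_ord j2).
have [-> ->] := divmod_split k1 (ltn_ord k2).
ring.
Qed.

Lemma ainner_sumr a1 a2 a3 n W (c : 'I_n -> R) (Y : 'I_n -> arr R) :
  ainner a1 a2 a3 W (fun h j k => \sum_(r < n) c r * Y r h j k) =
  \sum_(r < n) c r * ainner a1 a2 a3 W (Y r).
Proof.
rewrite /ainner.
under eq_bigr => h _ do under eq_bigr => j _ do under eq_bigr => k _ do rewrite mulr_sumr.
under eq_bigr => h _ do under eq_bigr => j _ do rewrite exchange_big /=.
under eq_bigr => h _ do rewrite exchange_big /=.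
rewrite exchange_big /=; apply: eq_bigr => r _.
rewrite mulr_sumr; apply: eq_bigr => h _.
rewrite mulr_sumr; apply: eq_bigr => j _.
rewrite mulr_sumr; apply: eq_bigr => k _.
by rewrite mulrCA.
Qed.

Lemma ainner_suml a1 a2 a3 n W (c : 'I_n -> R) (Y : 'I_n -> arr R) :
  ainner a1 a2 a3 (fun h j k => \sum_(r < n) c r * Y r h j k) W =
  \sum_(r < n) c r * ainner a1 a2 a3 (Y r) W.
Proof. by rewrite ainnerC ainner_sumr; apply: eq_bigr => r _; rewrite ainnerC. Qed.

Definition box a1 a2 a3 U V := forall h j k, (h < a1)%N -> (j < a2)%N -> (k < a3)%N ->
  U h j k = V h j k.

Lemma ainner_box a1 a2 a3 U U' V V' : box a1 a2 a3 U U' -> box a1 a2 a3 V V' ->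
  ainner a1 a2 a3 U V = ainner a1 a2 a3 U' V'.
Proof.
move=> HU HV; rewrite /ainner; apply: eq_bigr => h _; apply: eq_bigr => j _.
by apply: eq_bigr => k _; rewrite HU ?HV.
Qed.

Definition rip_ineq a1 a2 a3 (n : nat) (X : nat -> arr R) (delta : R) S : bool :=
  (1 - delta) * ainner a1 a2 a3 S S <= n%:R^-1 * \sum_(i < n) ainner a1 a2 a3 (X i) S ^+ 2
    <= (1 + delta) * ainner a1 a2 a3 S S.

Lemma rip_ineq_box a1 a2 a3 n X delta S S' : box a1 a2 a3 S S' ->
  rip_ineq a1 a2 a3 n X delta S = rip_ineq a1 a2 a3 n X delta S'.
Proof.
move=> bS; have bX i : box a1 a2 a3 (X i) (X i) by [].
rewrite /rip_ineq (ainner_box bS bS).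
by under eq_bigr => i _ do rewrite (ainner_box (bX i) bS).
Qed.

Variables (d p q : nat -> nat).
Local Notation prodd s := (\prod_(m <- s) d m)%N.
Local Notation prodp s := (\prod_(m <- s) p m)%N.
Local Notation prodq s := (\prod_(m <- s) q m)%N.

Lemma akprod_eq_in (F G : nat -> arr R) s : {in s, F =1 G} ->
  akprod d p q F s = akprod d p q G s.
Proof.
elim: s => [|k s IH] //= H.
by rewrite H ?mem_head // IH // => x xs; apply: H; rewrite in_cons xs orbT.
Qed.

Lemma akprod_cat_cons (F : nat -> arr R) k s1 s2 :
  akprod d p q F ((k :: s1) ++ s2) =
  akron (prodd s2) (prodp s2) (prodq s2) (akprod d p q F (k :: s1)) (akprod d p q F s2).
Proof.
elim: s1 k => [|k' s1 IH] k.
  rewrite /= !big_nil; congr akron.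
  by apply/funext=> h; apply/funext=> j; apply/funext=> m; rewrite /akron !divn1 /aone mulr1.
transitivity (akron (prodd ((k' :: s1) ++ s2)) (prodp ((k' :: s1) ++ s2))
   (prodq ((k' :: s1) ++ s2)) (F k) (akprod d p q F ((k' :: s1) ++ s2))); first by [].
by rewrite IH !big_cat akronA.
Qed.

(* An ordered Kronecker product of a concatenation splits into two factors
   (up to entries outside its shape when the first list is empty). *)
Lemma akprod_cat_box (F : nat -> arr R) s1 s2 :
  box (prodd (s1 ++ s2)) (prodp (s1 ++ s2)) (prodq (s1 ++ s2)) (akprod d p q F (s1 ++ s2))
    (akron (prodd s2) (prodp s2) (prodq s2) (akprod d p q F s1) (akprod d p q F s2)).
Proof.
case: s1 => [|k s1] h j m hh jj mm; last by rewrite akprod_cat_cons.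
by rewrite /= /akron /aone mul1r !modn_small.
Qed.

End ArrayAlgebra.

Lemma mem_descseq lo hi k : (k \in descseq lo hi) = (lo <= k <= hi)%N.
Proof.
by rewrite /descseq mem_rev mem_iota; apply/idP/idP; lia.
Qed.

Lemma descseq_split L l : (1 <= l <= L)%N ->
  descseq 1 L = descseq l.+1 L ++ l :: descseq 1 l.-1.
Proof.
case/andP=> l1 lL; rewrite /descseq.
have -> : (L.+1 - 1 = l.-1 + (1 + (L.+1 - l.+1)))%N.
  by rewrite subn1 /= subSS; case: l l1 lL => // l _ lL; rewrite /= addnA addn1 subnKC.
rewrite iotaD iotaD; case: l l1 lL => // l _ lL.
by rewrite !rev_cat /= add1n addn1 subn1 -catA.
Qed.

Section ColumnVectors.
Variable R : realType.
Implicit Types (a : R).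

Definition dotc (N : nat) (u v : 'cV[R]_N) : R := \sum_(r < N) u r 0 * v r 0.

Variable N : nat.
Implicit Types u v w : 'cV[R]_N.

Lemma dotcC u v : dotc u v = dotc v u.
Proof. by apply: eq_bigr => r _; rewrite mulrC. Qed.

Lemma dotcDl u v w : dotc (u + v) w = dotc u w + dotc v w.
Proof. by rewrite /dotc -big_split; apply: eq_bigr => r _; rewrite mxE mulrDl. Qed.

Lemma dotcDr u v w : dotc w (u + v) = dotc w u + dotc w v.
Proof. by rewrite dotcC dotcDl !(dotcC w). Qed.

Lemma dotcZl a u v : dotc (a *: u) v = a * dotc u v.
Proof. by rewrite /dotc mulr_sumr; apply: eq_bigr => r _; rewrite mxE mulrA. Qed.

Lemma dotcZr a u v : dotc u (a *: v) = a * dotc u v.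
Proof. by rewrite dotcC dotcZl dotcC. Qed.

Lemma dotc0l v : dotc 0 v = 0.
Proof. by rewrite -(scale0r 0) dotcZl mul0r. Qed.

Lemma dotc0r u : dotc u 0 = 0.
Proof. by rewrite dotcC dotc0l. Qed.

Lemma dotc_ge0 u : 0 <= dotc u u.
Proof. by apply: sumr_ge0 => r _; rewrite -expr2 sqr_ge0. Qed.

Lemma dotc_eq0 u : dotc u u = 0 -> u = 0.
Proof.
move/psumr_eq0P=> u0; apply/matrixP => r k; rewrite (ord1 k) mxE.
have /eqP := u0 (fun i _ => sqr_ge0 (u i 0)) r isT.
by rewrite mulf_eq0 orbb => /eqP.
Qed.

Lemma vnorm_dotc u : vnorm u = Num.sqrt (dotc u u).
Proof. by rewrite /vnorm; congr Num.sqrt; apply: eq_bigr => r _; rewrite expr2. Qed.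

Lemma qform n a (y z : nat -> 'cV[R]_N) u v :
  (u^T *m (a *: \sum_(i < n) (y i *m (z i)^T)) *m v) 0 0 =
  a * \sum_(i < n) dotc u (y i) * dotc v (z i).
Proof.
rewrite -scalemxAr -scalemxAl mxE; congr (_ * _).
rewrite mulmx_sumr mulmx_suml summxE; apply: eq_bigr => i _.
rewrite !mulmxA -(mulmxA _ (z i)^T) mxE big_ord1 /dotc !mxE.
by congr (_ * _); apply: eq_bigr => r _; rewrite !mxE // mulrC.
Qed.

Lemma specnorm_le (M : 'M[R]_N) K : 0 <= K ->
  (forall v, vnorm v = 1 -> vnorm (M *m v) <= K) -> specnorm M <= K.
Proof.
move=> K0 bound; rewrite /specnorm.
have [[v0 hv0]|nex] := pselect (exists v : 'cV[R]_N, vnorm v = 1).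
  apply: ge_sup; first by exists (vnorm (M *m v0)); exists v0.
  by move=> y [v hv <-]; apply: bound.
suff -> : [set vnorm (M *m v) | v in [set v : 'cV[R]_N | vnorm v = 1]] = set0 by rewrite sup0.
by apply/seteqP; split=> // y [v hv _]; apply: nex; exists v.
Qed.

End ColumnVectors.

(* The one-variable inequality behind the final bound: if
   (1-delta) a <= e and 2 s e <= delta (s^2 a + b) for all s > 0, then
   (1-delta) sqrt a <= delta sqrt b, which gives the stated constant. *)
Lemma sqrt_le_of_polar (R : realType) (delta a b e : R) :
  0 < delta -> delta < 1 / 3 -> 0 <= a -> 0 <= b ->
  (1 - delta) * a <= e ->
  (forall s, 0 < s -> 2 * s * e <= delta * (s ^+ 2 * a + b)) ->
  Num.sqrt a <= 3 * delta / (1 - 3 * delta) * Num.sqrt b.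
Proof.
move=> d0 d3 a0 b0 lo up.
set ra := Num.sqrt a; set rb := Num.sqrt b.
have ra0 : 0 <= ra := sqrtr_ge0 a; have rb0 : 0 <= rb := sqrtr_ge0 b.
have aE : a = ra ^+ 2 by rewrite sqr_sqrtr.
have bE : b = rb ^+ 2 by rewrite sqr_sqrtr.
(* the choice s = (1-delta)/delta *)
have sd : (1 - delta) / delta * delta = 1 - delta by rewrite divfK ?gt_eqF.
have s0 : 0 < (1 - delta) / delta by apply: divr_gt0; lra.
have := up _ s0; set s := (1 - delta) / delta in sd * => H.
have Hd : 2 * (1 - delta) * e <= (1 - delta) ^+ 2 * a + delta ^+ 2 * b.
  have := ler_wpM2l (ltW d0) H.
  have -> : delta * (2 * s * e) = 2 * (1 - delta) * e by rewrite -sd; ring.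
  suff -> : delta * (delta * (s ^+ 2 * a + b)) = (1 - delta) ^+ 2 * a + delta ^+ 2 * b by [].
  by rewrite -sd; ring.
have d1 : 0 < 1 - delta by lra.
have lo' := ler_wpM2l (ltW d1) lo.
have sq : (1 - delta) ^+ 2 * a <= delta ^+ 2 * b by nra.
have lin : (1 - delta) * ra <= delta * rb.
  have nn1 : (1 - delta) * ra \in Num.nneg by rewrite nnegrE mulr_ge0 // ltW.
  have nn2 : delta * rb \in Num.nneg by rewrite nnegrE mulr_ge0 // ltW.
  by rewrite -(ler_pXn2r (isT : (0 < 2)%N) nn1 nn2) !exprMn -aE -bE.
set K := 3 * delta / (1 - 3 * delta).
have KE : K * (1 - 3 * delta) = 3 * delta by rewrite divfK // gt_eqF //; lra.
nra.
Qed.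

(* The statement in vector form.  xh i and x i play the roles of vec of the
   reduced designs at A^ and at A, and c that of <A^, A>. *)
Section QuadraticRIP.
Variables (R : realType) (N n : nat) (xh x : nat -> 'cV[R]_N) (c delta : R).
Hypotheses (delta_gt0 : 0 < delta) (delta_lt : delta < 1 / 3).

Definition qemp (u v : 'cV[R]_N) : R :=
  n%:R^-1 * \sum_(i < n) (dotc u (xh i) + dotc v (x i)) ^+ 2.

(* its population counterpart: the squared norm of A^ (x) B_u (x) G + A (x) B_v (x) G *)
Definition qpop (u v : 'cV[R]_N) : R := dotc u u + 2 * c * dotc u v + dotc v v.

Hypothesis vec_rip :
  forall u v, (1 - delta) * qpop u v <= qemp u v <= (1 + delta) * qpop u v.

Definition Sig_hat : 'M[R]_N := n%:R^-1 *: \sum_(i < n) (xh i *m (xh i)^T).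
Definition Sig : 'M[R]_N := n%:R^-1 *: \sum_(i < n) (xh i *m (x i)^T).

(* The restriction v = 0 of the hypothesis: Sig_hat >= (1 - delta) I. *)
Lemma Sig_hat_lower u : (1 - delta) * dotc u u <= (u^T *m Sig_hat *m u) 0 0.
Proof.
have /andP[low _] := vec_rip u 0.
rewrite /qpop dotc0r dotc0l mulr0 !addr0 in low.
suff -> : (u^T *m Sig_hat *m u) 0 0 = qemp u 0 by [].
rewrite /qemp /Sig_hat qform; congr (_ * _).
by apply: eq_bigr => i _; rewrite dotc0l addr0 expr2.
Qed.

Lemma Sig_hat_unit : Sig_hat \in unitmx.
Proof.
rewrite unitmxE unitfE; apply/det0P => -[v vn0 vS].
have := Sig_hat_lower v^T; rewrite trmxK vS mul0mx mxE => low.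
have v0 : v^T = 0.
  apply: dotc_eq0; apply/le_anti; rewrite dotc_ge0 andbT.
  by rewrite -(@ler_pM2l _ (1 - delta)) ?mulr0 //; move: delta_lt; lra.
by move: vn0; rewrite -[v]trmxK v0 trmx0 eqxx.
Qed.

Definition cross (w v : 'cV[R]_N) : R :=
  n%:R^-1 * \sum_(i < n) dotc w (xh i) * (c * dotc v (xh i) - dotc v (x i)).

Lemma cross_bilin w v : (w^T *m (c *: Sig_hat - Sig) *m v) 0 0 = cross w v.
Proof.
rewrite mulmxBr mulmxBl -scalemxAr -scalemxAl [LHS]mxE [X in _ + X]mxE [X in X + _]mxE.
rewrite /Sig_hat /Sig !qform /cross mulrCA -mulrBr; congr (_ * _).
by rewrite mulr_sumr -sumrB; apply: eq_bigr => i _; ring.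
Qed.

(* Polarization of the hypothesis at (s w + t c v, - t v), t = +-1: the two
   arguments have population norm s^2 |w|^2 + 1 - c^2 when |v| = 1. *)
Lemma cross_bound w v s : dotc v v = 1 -> 0 < s ->
  2 * s * cross w v <= delta * (s ^+ 2 * dotc w w + (1 - c ^+ 2)).
Proof.
move=> v1 s0; set m := s ^+ 2 * dotc w w + (1 - c ^+ 2).
pose a i := dotc w (xh i); pose b i := c * dotc v (xh i) - dotc v (x i).
have rip_t t : t ^+ 2 = 1 ->
    (1 - delta) * m <= n%:R^-1 * \sum_(i < n) (s * a i + t * b i) ^+ 2 <= (1 + delta) * m.
  move=> t2.
  have Hq : qpop (s *: w + (t * c) *: v) ((- t) *: v) = m.
    rewrite /qpop !(dotcDl, dotcDr, dotcZl, dotcZr) (dotcC v w) v1 /m.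
    transitivity (s ^+ 2 * dotc w w + t ^+ 2 * (1 - c ^+ 2)); first ring.
    by rewrite t2 mul1r.
  have He : qemp (s *: w + (t * c) *: v) ((- t) *: v) =
            n%:R^-1 * \sum_(i < n) (s * a i + t * b i) ^+ 2.
    rewrite /qemp; congr (_ * _); apply: eq_bigr => i _.
    by rewrite !(dotcDl, dotcZl) /a /b; congr (_ ^+ 2); ring.
  by rewrite -Hq -He; apply: vec_rip.
have /andP[_ up] := rip_t 1 (expr1n _ _).
have /andP[lo _] := rip_t (-1) (etrans (sqrrN 1) (expr1n _ 2)).
have diff : n%:R^-1 * \sum_(i < n) (s * a i + 1 * b i) ^+ 2 -
            n%:R^-1 * \sum_(i < n) (s * a i + (-1) * b i) ^+ 2 = 4 * s * cross w v.
  rewrite -mulrBr -sumrB /cross [RHS]mulrCA; congr (_ * _).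
  by rewrite mulr_sumr; apply: eq_bigr => i _; rewrite /a /b; ring.
nra.
Qed.

Lemma unit_sphere_bound v : vnorm v = 1 ->
  vnorm (invmx Sig_hat *m (c *: Sig_hat - Sig) *m v) <=
  3 * delta / (1 - 3 * delta) * Num.sqrt (1 - c ^+ 2).
Proof.
move=> v1.
have vv : dotc v v = 1.
  by rewrite -(sqr_sqrtr (dotc_ge0 v)) -vnorm_dotc v1 expr1n.
set w := invmx Sig_hat *m _ *m v.
have Sw : Sig_hat *m w = (c *: Sig_hat - Sig) *m v.
  by rewrite /w !mulmxA mulmxV ?Sig_hat_unit // mul1mx.
have lo : (1 - delta) * dotc w w <= cross w v.
  by rewrite -cross_bilin -mulmxA -Sw mulmxA; apply: Sig_hat_lower.
(* 1 - c^2 >= 0 is the case w = 0 of the polarization bound *)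
have c2 : 0 <= 1 - c ^+ 2.
  have := cross_bound 0 vv ltr01.
  rewrite /cross big1 => [|i _]; last by rewrite dotc0l mul0r.
  by rewrite dotc0l !mulr0 add0r pmulr_rge0.
rewrite vnorm_dotc; apply: (sqrt_le_of_polar delta_gt0 delta_lt (dotc_ge0 w) c2 lo).
by move=> s s0; apply: cross_bound.
Qed.

Theorem quadratic_rip_bound :
  Sig_hat \in unitmx /\
  specnorm (invmx Sig_hat *m (c *: Sig_hat - Sig)) <=
    3 * delta / (1 - 3 * delta) * Num.sqrt (1 - c ^+ 2).
Proof.
split; first exact: Sig_hat_unit.
apply: specnorm_le; last exact: unit_sphere_bound.
by apply: mulr_ge0 (sqrtr_ge0 _); apply: divr_ge0; move: delta_gt0 delta_lt; lra.
Qed.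

End QuadraticRIP.

(* Column vectors of length b1*b2*b3 as arrays of shape b1 x b2 x b3: the
   coordinate r of avec sits at the entry (i1 r, i2 r, i3 r), and Bu u is the
   array whose vectorization is u, written in the basis of unit arrays. *)
Section VectorsAsArrays.
Variable R : realType.
Variables (b1 b2 b3 : nat).
Hypotheses (b2p : (0 < b2)%N) (b3p : (0 < b3)%N).
Local Notation N := (b1 * b2 * b3)%N.

Definition i1 (r : nat) := (r %/ (b2 * b3))%N.
Definition i2 (r : nat) := ((r %/ b3) %% b2)%N.
Definition i3 (r : nat) := (r %% b3)%N.

Lemma idx_rec r : r = (i1 r * (b2 * b3) + i2 r * b3 + i3 r)%N.
Proof.
rewrite /i1 /i2 /i3 [(b2 * b3)%N]mulnC divnMA.
rewrite {1}(divn_eq r b3) {1}(divn_eq (r %/ b3) b2).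
by rewrite mulnDl [(b3 * b2)%N]mulnC mulnA.
Qed.

Lemma idx_inj r s : i1 r = i1 s -> i2 r = i2 s -> i3 r = i3 s -> r = s.
Proof. by move=> e1 e2 e3; rewrite (idx_rec r) (idx_rec s) e1 e2 e3. Qed.

Lemma idx_box (r : 'I_N) : [/\ (i1 r < b1)%N, (i2 r < b2)%N & (i3 r < b3)%N].
Proof.
split; [|exact: ltn_pmod|exact: ltn_pmod].
by rewrite /i1 ltn_divLR ?muln_gt0 ?b2p // mulnA.
Qed.

Lemma sum_indicator (a x y : nat) : (x < a)%N ->
  \sum_(h < a) ((h == x :> nat)%:R * (h == y :> nat)%:R : R) = (x == y)%:R.
Proof.
move=> xa; rewrite (bigD1 (Ordinal xa)) //= eqxx mul1r big1 ?addr0 // => h.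
by rewrite -val_eqE /= => /negbTE ->; rewrite mul0r.
Qed.

Lemma ainner_delta x1 x2 x3 y1 y2 y3 : (x1 < b1)%N -> (x2 < b2)%N -> (x3 < b3)%N ->
  ainner b1 b2 b3 (adelta R x1 x2 x3) (adelta R y1 y2 y3) =
  ((x1 == y1) && (x2 == y2) && (x3 == y3))%:R.
Proof.
move=> h1 h2 h3; rewrite /ainner /adelta.
have E (h j k : nat) : (((h == x1) && (j == x2) && (k == x3))%:R *
   ((h == y1) && (j == y2) && (k == y3))%:R : R) =
   ((h == x1)%:R * (h == y1)%:R) * (((j == x2)%:R * (j == y2)%:R) *
   ((k == x3)%:R * (k == y3)%:R)).
  by rewrite -!mulnb !natrM; ring.
under eq_bigr => h _ do under eq_bigr => j _ do under eq_bigr => k _ do rewrite E.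
under eq_bigr => h _ do under eq_bigr => j _ do rewrite -mulr_sumr -mulr_sumr.
under eq_bigr => h _ do rewrite -mulr_sumr -mulr_suml.
by rewrite -mulr_suml !sum_indicator // -!mulnb !natrM; ring.
Qed.

Definition dlt (r : nat) : arr R := adelta R (i1 r) (i2 r) (i3 r).

Definition Bu (u : 'cV[R]_N) : arr R := fun h j k => \sum_(r < N) u r 0 * dlt r h j k.

Lemma ainner_Bu u v : ainner b1 b2 b3 (Bu u) (Bu v) = dotc u v.
Proof.
rewrite /Bu ainner_suml /dotc; apply: eq_bigr => r _.
have [? ? ?] := idx_box r.
rewrite ainner_sumr (bigD1 r) //= big1 ?addr0.
  by rewrite /dlt ainner_delta // !eqxx mulr1.
move=> s /negbTE rs; rewrite /dlt ainner_delta //.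
case: (boolP (_ && _ && _)); last by rewrite mulr0.
case/andP=> /andP[/eqP e1 /eqP e2] /eqP e3.
by move: rs; rewrite -val_eqE /= (idx_inj e1 e2 e3) eqxx.
Qed.

End VectorsAsArrays.

Section SliceEmbedding.
Variable R : realType.
Variables (a1 a2 a3 m1 m2 m3 b1 b2 b3 : nat) (G : arr R).

Definition T (A U : arr R) : arr R :=
  akron (b1 * m1) (b2 * m2) (b3 * m3) A (akron m1 m2 m3 U G).

Lemma T_ainner (A A' U U' : arr R) :
  ainner (a1 * b1 * m1) (a2 * b2 * m2) (a3 * b3 * m3) (T A U) (T A' U') =
  ainner a1 a2 a3 A A' * (ainner b1 b2 b3 U U' * ainner m1 m2 m3 G G).
Proof. by rewrite -!mulnA /T !ainner_kron. Qed.

Lemma dot_avec u X A :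
  dotc u (avec b1 b2 b3 (atilde a1 a2 a3 m1 m2 m3 b1 b2 b3 X A G)) =
  ainner (a1 * b1 * m1) (a2 * b2 * m2) (a3 * b3 * m3) X (T A (Bu u)).
Proof.
have -> : T A (Bu u) = fun h j k => \sum_(r < b1 * b2 * b3) u r 0 * T A (dlt R b2 b3 r) h j k.
  apply/funext=> h; apply/funext=> j; apply/funext=> k.
  by rewrite /T /akron /Bu mulr_suml mulr_sumr; apply: eq_bigr => r _; ring.
rewrite ainner_sumr /dotc; apply: eq_bigr => r _.
by rewrite mxE.
Qed.

End SliceEmbedding.

Section SliceRIP.
Variables (R : realType) (a1 a2 a3 m1 m2 m3 b1 b2 b3 n : nat).
Variables (G Ah Aa : arr R) (X : nat -> arr R) (delta : R).
Hypotheses (b2p : (0 < b2)%N) (b3p : (0 < b3)%N).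
Hypotheses (nG : ainner m1 m2 m3 G G = 1) (nAh : ainner a1 a2 a3 Ah Ah = 1)
  (nAa : ainner a1 a2 a3 Aa Aa = 1).
Local Notation F1 := (a1 * b1 * m1)%N.
Local Notation F2 := (a2 * b2 * m2)%N.
Local Notation F3 := (a3 * b3 * m3)%N.
Local Notation TG := (T m1 m2 m3 b1 b2 b3 G).

Hypothesis slice_rip :
  forall U V : arr R, rip_ineq F1 F2 F3 n X delta (alin 1 (TG Ah U) 1 (TG Aa V)).

(* Through u |-> Bu u the array inequality becomes the vector hypothesis of
   [quadratic_rip_bound], with c = <A^, A>. *)
Lemma vec_rip_of_slice :
  let xh i := avec b1 b2 b3 (atilde a1 a2 a3 m1 m2 m3 b1 b2 b3 (X i) Ah G) in
  let x i := avec b1 b2 b3 (atilde a1 a2 a3 m1 m2 m3 b1 b2 b3 (X i) Aa G) in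
  let c := ainner a1 a2 a3 Ah Aa in
  forall u v : 'cV[R]_(b1 * b2 * b3),
  (1 - delta) * qpop c u v <= qemp n xh x u v <= (1 + delta) * qpop c u v.
Proof.
move=> xh x c u v.
have norm : ainner F1 F2 F3 (alin 1 (TG Ah (Bu u)) 1 (TG Aa (Bu v)))
                            (alin 1 (TG Ah (Bu u)) 1 (TG Aa (Bu v)))
            = qpop c u v.
  rewrite ainner_linl !ainner_linr !T_ainner !ainner_Bu // nG nAh nAa.
  by rewrite (ainnerC _ _ _ Aa) (dotcC v) /qpop -/c; ring.
have meas i : ainner F1 F2 F3 (X i) (alin 1 (TG Ah (Bu u)) 1 (TG Aa (Bu v)))
              = dotc u (xh i) + dotc v (x i).
  by rewrite ainner_linr /xh /x !dot_avec !mul1r.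
have := slice_rip (Bu u) (Bu v); rewrite /rip_ineq norm.
suff -> : qemp n xh x u v = n%:R^-1 * \sum_(i < n) ainner F1 F2 F3 (X i)
    (alin 1 (TG Ah (Bu u)) 1 (TG Aa (Bu v))) ^+ 2 by [].
by rewrite /qemp; congr (_ * _); apply: eq_bigr => i _; rewrite meas.
Qed.

End SliceRIP.

(* From the condition (RIP) to the slice form: splicing U into position l of the
   factors of A^ (resp. V into that of A), with the factors of G^ below l,
   turns the two L-fold Kronecker products into A^ (x) U (x) G^ and
   A (x) V (x) G^. *)
Section FactorRIP.
Variables (R : realType) (L : nat) (d p q : nat -> nat) (n : nat).
Variables (X : nat -> arr R) (delta : R) (l : nat) (Ghat : nat -> arr R).
Local Notation sA := (descseq l.+1 L).
Local Notation sG := (descseq 1 l.-1).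
Local Notation prodd s := (\prod_(m <- s) d m)%N.
Local Notation prodp s := (\prod_(m <- s) p m)%N.
Local Notation prodq s := (\prod_(m <- s) q m)%N.
Local Notation FD := (prodd sA * d l * prodd sG)%N.
Local Notation FP := (prodp sA * p l * prodp sG)%N.
Local Notation FQ := (prodq sA * q l * prodq sG)%N.
Local Notation TG :=
  (T (prodd sG) (prodp sG) (prodq sG) (d l) (p l) (q l) (akprod d p q Ghat sG)).

Definition splice (Z : nat -> arr R) (W : arr R) (k : nat) : arr R :=
  if (l < k)%N then Z k else if k == l then W else Ghat k.

Lemma prod_cat_split (f : nat -> nat) :
  (\prod_(m <- sA ++ l :: sG) f m = \prod_(m <- sA) f m * f l * \prod_(m <- sG) f m)%N.
Proof. by rewrite big_cat big_cons /= mulnA. Qed.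

Lemma akprod_splice Z W :
  box FD FP FQ (akprod d p q (splice Z W) (sA ++ l :: sG)) (TG (akprod d p q Z sA) W).
Proof.
move=> h j k hh jj kk; rewrite akprod_cat_box ?prod_cat_split //.
rewrite (@akprod_eq_in _ d p q (splice Z W) Z); last first.
  by move=> m; rewrite mem_descseq /splice => /andP[-> _].
rewrite /T !big_cons /=.
have -> : splice Z W l = W by rewrite /splice ltnn eqxx.
rewrite (@akprod_eq_in _ d p q (splice Z W) Ghat) // => m.
rewrite mem_descseq /splice => mG; have ml : (m < l)%N by move: mG; lia.
by rewrite ltnNge (ltnW ml) /= ltn_eqF.
Qed.

Lemma rip_slice (Ahat A : nat -> arr R) : (1 <= l <= L)%N -> RIP L d p q n X delta ->
  forall U V : arr R,
  rip_ineq FD FP FQ n X delta (alin 1 (TG (akprod d p q Ahat sA) U) 1 (TG (akprod d p q A sA) V)).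
Proof.
move=> hl [_ hrip] U V; set S0 := alin _ _ _ _.
have := hrip (fun r => if r == 1%N then splice Ahat U else splice A V).
rewrite /= (descseq_split hl) !prod_cat_split.
have bx : box FD FP FQ (aadd (akprod d p q (splice Ahat U) (sA ++ l :: sG))
                             (akprod d p q (splice A V) (sA ++ l :: sG))) S0.
  by move=> h j k hh jj kk; rewrite /aadd /S0 /alin !mul1r !akprod_splice.
by rewrite -(rip_ineq_box _ _ _ bx).
Qed.

End FactorRIP.

Theorem lemma4 (R : realType) (L : nat) (d p q : nat -> nat) (n : nat)
    (X : nat -> arr R) (delta : R) (l : nat) (Ahat A Ghat : nat -> arr R) :
  (2 <= L)%N ->
  (forall k, (1 <= k <= L)%N -> (0 < d k)%N /\ (0 < p k)%N /\ (0 < q k)%N) ->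
  RIP L d p q n X delta ->
  0 < delta -> delta < 1 / 3 ->
  (1 <= l <= L)%N ->
  let sA := descseq l.+1 L in
  let sG := descseq 1 l.-1 in
  let Dp := (\prod_(m <- sA) d m)%N in
  let Pp := (\prod_(m <- sA) p m)%N in
  let Qp := (\prod_(m <- sA) q m)%N in
  let Dm := (\prod_(m <- sG) d m)%N in
  let Pm := (\prod_(m <- sG) p m)%N in
  let Qm := (\prod_(m <- sG) q m)%N in
  let Ah := akprod d p q Ahat sA in
  let Aa := akprod d p q A sA in
  let Gh := akprod d p q Ghat sG in
  afnorm Dp Pp Qp Ah = 1 -> afnorm Dp Pp Qp Aa = 1 -> afnorm Dm Pm Qm Gh = 1 ->
  let xh i := avec (d l) (p l) (q l)
                (atilde Dp Pp Qp Dm Pm Qm (d l) (p l) (q l) (X i) Ah Gh) in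
  let x i := avec (d l) (p l) (q l)
                (atilde Dp Pp Qp Dm Pm Qm (d l) (p l) (q l) (X i) Aa Gh) in
  let Sh := n%:R^-1 *: \sum_(i < n) (xh i *m (xh i)^T) in
  let S := n%:R^-1 *: \sum_(i < n) (xh i *m (x i)^T) in
  Sh \in unitmx /\
  specnorm (invmx Sh *m (ainner Dp Pp Qp Ah Aa *: Sh - S))
    <= 3 * delta / (1 - 3 * delta) * adist Dp Pp Qp Ah Aa.
Proof.
move=> _ dpos hrip d0 d3 hl sA sG Dp Pp Qp Dm Pm Qm Ah Aa Gh nAh nAa nGh xh x Sh S.
have [_ [pl0 ql0]] := dpos l hl.
have [nAh1 nAa1 nGh1] := And3 (afnorm_eq1 nAh) (afnorm_eq1 nAa) (afnorm_eq1 nGh).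
have vrip := vec_rip_of_slice pl0 ql0 nGh1 nAh1 nAa1 (rip_slice Ghat Ahat A hl hrip).
by rewrite adist_unit //; exact: quadratic_rip_bound d0 d3 vrip.
Qed.
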